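(* Let $X\subseteq\Omega$ and $D\in\mathcal{I}^{\mathbf{c}}(X)$, and let $Y=\min(D)\cup(X-D)$. Then $\min(D)\subseteq\max(Y)$, and $$\pi(X,D)=\pi(Y,\min(D))=\sum_{I\in\mathcal{I}(Y)}(-1)^{|I\cap\min(D)|}\Big(\prod_{i\in I-\max(I)}\tau_{(i)}\Big)\Big(\prod_{i\in\max(I)-\min(D)}\eta_{(i)}\Big)x^{|I|}.$$
   Context: $\Omega$ is a finite set and $\mathbf{P}=(\Omega,\preccurlyeq_{\mathbf{P}})$ a poset. For $Y\subseteq\Omega$: $\max(Y)$, $\min(Y)$ are the maximal, minimal elements of $Y$ w.r.t. $\preccurlyeq_{\mathbf{P}}$; $\mathcal{I}(Y)$ is the set of ideals (down-closed subsets) of the subposet $Y$ with the induced order; $\mathcal{I}^{\mathbf{c}}(Y)$ is the set of ideals of the dual of that subposet (i.e., up-closed subsets of $Y$). $K$ is a commutative ring and $\tau,\eta\in K^{\Omega}$ are fixed. For $D,I\subseteq\Omega$, $\varphi(D,I)=(-1)^{|I\cap D|}\big(\prod_{i\in I-\max(I)}\tau_{(i)}\big)\big(\prod_{i\in\max(I)-D}\eta_{(i)}\big)$ if $I\cap D\subseteq\max(I)$, and $\varphi(D,I)=0$ otherwise. For $Y\subseteq\Omega$ and $D\subseteq Y$, $\pi(Y,D)=\sum_{I\in\mathcal{I}(Y)}\varphi(D,I)x^{|I|}\in K[x]$. *)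

From mathcomp Require Import all_boot all_order all_algebra.
Set Implicit Arguments. Unset Strict Implicit. Unset Printing Implicit Defensive.
Import GRing.Theory.
Local Open Scope ring_scope.

(* The poset P = (Omega, le) is given by a relation le on a finite type Omega
   (the order axioms are hypotheses of the theorem). *)
Section Poset.
Variables (Omega : finType) (le : rel Omega).

Definition maxs (Y : {set Omega}) : {set Omega} :=
  [set y in Y | [forall z in Y, le y z ==> (z == y)]].
Definition mins (Y : {set Omega}) : {set Omega} :=
  [set y in Y | [forall z in Y, le z y ==> (z == y)]].

Definition is_ideal (Y I : {set Omega}) : bool :=
  (I \subset Y) && [forall i in I, forall j in Y, le j i ==> (j \in I)].
(* D is an ideal of the dual of Y, i.e. an up-closed subset of Y *)
Definition is_coideal (Y D : {set Omega}) : bool :=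
  (D \subset Y) && [forall i in D, forall j in Y, le i j ==> (j \in D)].

Variables (K : comNzRingType) (tau eta : Omega -> K).

Definition varphi (D I : {set Omega}) : K :=
  if I :&: D \subset maxs I then
    (-1) ^+ #|I :&: D| * (\prod_(i in I :\: maxs I) tau i)
      * (\prod_(i in maxs I :\: D) eta i)
  else 0.

Definition piY (Y D : {set Omega}) : {poly K} :=
  \sum_(I : {set Omega} | is_ideal Y I) varphi D I *: 'X^#|I|.

End Poset.

From mathcomp Require Import all_boot all_order all_algebra.
Import GRing.Theory.
Local Open Scope ring_scope.

(* An ideal I of X contributes to pi(X, D) only if I :&: D consists of maximal
   elements of I.  For such I every element i of I :&: D is minimal in the
   up-set D: an element z <= i of D lies in the ideal I, hence in I :&: D, so
   it is maximal in I and z <= i forces z = i.  Thus the contributing ideals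
   are exactly the ideals of Y = min(D) :|: (X :\: D), and on them varphi only
   sees I :&: D = I :&: min(D).  None of the order axioms is needed. *)

Section Views.
Context {Omega : finType} {le : rel Omega}.

Lemma is_idealP (Y I : {set Omega}) :
  reflect (I \subset Y /\ forall i j, i \in I -> j \in Y -> le j i -> j \in I)
          (is_ideal le Y I).
Proof.
apply: (iffP andP) => [[sIY /forallP downI]|[sIY downI]]; split => //.
  move=> i j iI jY; move/(_ i): downI; rewrite iI /= => /forallP/(_ j).
  by rewrite jY /= => /implyP.
apply/forallP => i; apply/implyP => iI; apply/forallP => j; apply/implyP => jY.
by apply/implyP; apply: downI.
Qed.

Lemma maxsP (Y : {set Omega}) x :
  reflect (x \in Y /\ forall z, z \in Y -> le x z -> z = x) (x \in maxs le Y).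
Proof.
rewrite inE; apply: (iffP andP) => [[xY /forallP maxx]|[xY maxx]]; split => //.
  by move=> z zY lxz; apply/eqP; move/(_ z): maxx; rewrite zY lxz.
by apply/forallP => z; apply/implyP => zY; apply/implyP => lxz; apply/eqP; apply: maxx.
Qed.

Lemma maxs_subset (Y : {set Omega}) : maxs le Y \subset Y.
Proof. by apply/subsetP => x /maxsP[]. Qed.

Lemma setI_subset_maxs (Y I A : {set Omega}) :
  I \subset Y -> A \subset maxs le Y -> I :&: A \subset maxs le I.
Proof.
move=> sIY sAY; apply/subsetP => x /setIP[xI /(subsetP sAY)/maxsP[_ maxx]].
by apply/maxsP; split=> // z zI; apply: maxx; apply: (subsetP sIY).
Qed.

End Views.

Section Duals.
Context {Omega : finType} {le : rel Omega}.

Lemma is_coidealP (Y D : {set Omega}) :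
  reflect (D \subset Y /\ forall i j, i \in D -> j \in Y -> le i j -> j \in D)
          (is_coideal le Y D).
Proof. exact: (@is_idealP _ (fun x y => le y x)). Qed.

Lemma minsP (Y : {set Omega}) x :
  reflect (x \in Y /\ forall z, z \in Y -> le z x -> z = x) (x \in mins le Y).
Proof. exact: (@maxsP _ (fun x y => le y x)). Qed.

Lemma mins_subset (Y : {set Omega}) : mins le Y \subset Y.
Proof. by apply/subsetP => x /minsP[]. Qed.

End Duals.

Section Varphi.
Context {Omega : finType} {le : rel Omega}.
Context {K : comNzRingType} (tau eta : Omega -> K).

Lemma varphi_eq0 {D I : {set Omega}} :
  ~~ (I :&: D \subset maxs le I) -> varphi le tau eta D I = 0.
Proof. by move=> notmax; rewrite /varphi ifN. Qed.

Lemma eq_varphi {D D' I : {set Omega}} :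
  I :&: D = I :&: D' -> varphi le tau eta D I = varphi le tau eta D' I.
Proof.
move=> eqID; have eqMD : maxs le I :\: D = maxs le I :\: D'.
  apply/setP => x; rewrite !in_setD; case xM: (x \in maxs le I); rewrite ?andbF //=.
  have xI : x \in I := subsetP (maxs_subset I) x xM.
  by move/setP/(_ x): (eqID); rewrite !inE xI /= => ->.
by rewrite /varphi eqID eqMD.
Qed.

End Varphi.

Section Truncation.
Context {Omega : finType} {le : rel Omega}.
Context {X D : {set Omega}}.
Hypothesis coD : is_coideal le X D.
Local Notation Y := (mins le D :|: (X :\: D)).

Let sDX : D \subset X. Proof. by case/is_coidealP: coD. Qed.

Let upD {i j} : i \in D -> j \in X -> le i j -> j \in D.
Proof. by case/is_coidealP: coD => _; apply. Qed.

Let trunc_subset : Y \subset X.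
Proof. by rewrite subUset subsetDl (subset_trans (mins_subset D) sDX). Qed.

Let trunc_coideal_mins {y} : y \in Y -> y \in D -> y \in mins le D.
Proof. by case/setUP => // /setDP[_ /negP]. Qed.

Lemma mins_subset_maxs_trunc : mins le D \subset maxs le Y.
Proof.
apply/subsetP => m mm; have [mD _] := minsP _ _ mm.
apply/maxsP; split=> [|z zY lmz]; first by rewrite inE mm.
have zD := upD mD (subsetP trunc_subset z zY) lmz.
by have [_ minz] := minsP _ z (trunc_coideal_mins zY zD); rewrite (minz m mD lmz).
Qed.

Lemma ideal_trunc_setI (I : {set Omega}) :
  is_ideal le Y I -> I :&: D = I :&: mins le D.
Proof.
case/is_idealP => sIY _; apply/setP => x; rewrite !in_setI.
case xI: (x \in I) => //=; apply/idP/idP; last exact: (subsetP (mins_subset D)).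
exact: trunc_coideal_mins (subsetP sIY x xI).
Qed.

Lemma is_ideal_trunc (I : {set Omega}) :
  is_ideal le Y I = is_ideal le X I && (I :&: D \subset maxs le I).
Proof.
apply/idP/andP => [idY | [/is_idealP[sIX downI] maxID]].
  split; last first.
    rewrite ideal_trunc_setI //.
    by case/is_idealP: idY => sIY _; apply: setI_subset_maxs mins_subset_maxs_trunc.
  have [sIY downI] := is_idealP _ _ idY.
  apply/is_idealP; split=> [|i j iI jX lji]; first exact: subset_trans trunc_subset.
  case jD: (j \in D); last by apply: (downI i) => //; rewrite !inE jD jX orbT.
  have iY := subsetP sIY i iI; have iD := upD jD (subsetP trunc_subset i iY) lji.
  by have [_ mini] := minsP _ i (trunc_coideal_mins iY iD); rewrite (mini j jD lji).
apply/is_idealP; split=> [|i j iI jY]; last exact/downI/(subsetP trunc_subset).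
apply/subsetP => i iI; rewrite in_setU in_setD.
case iD: (i \in D); last by rewrite (subsetP sIX i iI) orbT.
apply/orP; left; apply/minsP; split=> // z zD lzi.
have zID : z \in I :&: D by rewrite inE (downI i z iI (subsetP sDX z zD) lzi) zD.
by have [_ maxz] := maxsP _ _ (subsetP maxID z zID); rewrite (maxz i iI lzi).
Qed.

End Truncation.

Theorem theorem3p1 (Omega : finType) (le : rel Omega)
  (le_refl : reflexive le) (le_anti : antisymmetric le)
  (le_trans : transitive le)
  (K : comNzRingType) (tau eta : Omega -> K)
  (X D : {set Omega}) (hD : is_coideal le X D) :
  let Y := mins le D :|: (X :\: D) in
  [/\ mins le D \subset maxs le Y,
      piY le tau eta X D = piY le tau eta Y (mins le D)
    & piY le tau eta Y (mins le D) =
      \sum_(I : {set Omega} | is_ideal le Y I)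
        ((-1) ^+ #|I :&: mins le D| * (\prod_(i in I :\: maxs le I) tau i)
          * (\prod_(i in maxs le I :\: mins le D) eta i)) *: 'X^#|I|].
Proof.
move=> Y; have minsY := mins_subset_maxs_trunc hD.
split=> //; rewrite /piY.
  rewrite [RHS](eq_bigl _ _ (is_ideal_trunc hD)) [RHS]big_mkcondr /=.
  apply: eq_bigr => I idX; case: ifP => [maxID | /negbT notmax].
    have idY : is_ideal le Y I by rewrite (is_ideal_trunc hD) idX maxID.
    by rewrite (eq_varphi tau eta (ideal_trunc_setI I idY)).
  by rewrite (varphi_eq0 tau eta notmax) scale0r.
apply: eq_bigr => I /is_idealP[sIY _].
by rewrite /varphi ifT //; apply: setI_subset_maxs minsY.
Qed.
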